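(* Let $\mathbb K$ be a field and $\alpha,\beta\in\mathbb K^\times$. Let $A=A_{\alpha,\beta}$ be the graded $\mathbb K$-algebra generated by the six degree-one elements $Y=\{a,b,c,x,y,z\}$ subject to the $26$ relations $$bY\cup Ya\cup\{x,y,z\}^2\cup\{a(x+y-z),\ (x-y)b,\ (x-z)b,\ xc-\alpha cx,\ yc-\beta cy,\ zc-cz\}$$ (here $bY=\{bu\mid u\in Y\}$, $Ya=\{ua\mid u\in Y\}$, $\{x,y,z\}^2$ is the set of the nine products of two of $x,y,z$). Then for every $n\ge0$ $$h_A(n+3)=\begin{cases}11,&\alpha^n+\beta^n=1,\\10,&\alpha^n+\beta^n\ne1.\end{cases}$$ In particular, the equation $\alpha^n+\beta^n=1$ has no solution with $\alpha,\beta\in\mathbb K^\times$ for any $n\ge3$ if and only if $h_{A_{\alpha,\beta}}(i)=10$ for all $i\ge6$ and all $\alpha,\beta\in\mathbb K^\times$.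
   Context: $h_A(n)=\dim A_n$. *)

From HB Require Import structures.
From mathcomp Require Import all_boot all_order all_algebra.
Set Implicit Arguments. Unset Strict Implicit. Unset Printing Implicit Defensive.
Import Order.TTheory GRing.Theory Num.Theory.
Local Open Scope ring_scope.

Definition ga : 'I_6 := inord 0.
Definition gb : 'I_6 := inord 1.
Definition gc : 'I_6 := inord 2.
Definition gx : 'I_6 := inord 3.
Definition gy : 'I_6 := inord 4.
Definition gz : 'I_6 := inord 5.

(* A homogeneous degree-2 element of the free algebra K<Y>:
   r s t = coefficient of the word  s t. *)
Definition quad (K : fieldType) := 'I_6 -> 'I_6 -> K.

Definition mono (K : fieldType) (p q : 'I_6) : quad K :=
  fun s t => ((s == p) && (t == q))%:R.

Definition qadd (K : fieldType) (r1 r2 : quad K) : quad K := fun s t => r1 s t + r2 s t.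
Definition qscale (K : fieldType) (k : K) (r : quad K) : quad K := fun s t => k * r s t.

Definition rels (K : fieldType) (al be : K) : seq (quad K) :=
  [seq mono K gb u | u <- enum 'I_6] ++
  [seq mono K u ga | u <- enum 'I_6] ++
  [seq mono K u v | u <- [:: gx; gy; gz], v <- [:: gx; gy; gz]] ++
  [:: qadd (qadd (mono K ga gx) (mono K ga gy)) (qscale (-1) (mono K ga gz));
      qadd (mono K gx gb) (qscale (-1) (mono K gy gb));
      qadd (mono K gx gb) (qscale (-1) (mono K gz gb));
      qadd (mono K gx gc) (qscale (- al) (mono K gc gx));
      qadd (mono K gy gc) (qscale (- be) (mono K gc gy));
      qadd (mono K gz gc) (qscale (-1) (mono K gc gz))].

(* Degree-n component of the free algebra K<Y>: functions on words of length n
   (coordinates in the basis of words). *)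
Definition freeDeg (K : fieldType) (n : nat) := {ffun n.-tuple 'I_6 -> K^o}.

(* The element  u r v  of degree n, for words u, v and a quadratic r
   (nonzero only on words of the form u s t v). *)
Definition relgen (K : fieldType) (n : nat) (r : quad K) (u v : seq 'I_6) :
  freeDeg K n :=
  [ffun w : n.-tuple 'I_6 =>
     if (take (size u) w == u) && (drop (size u + 2) w == v)
     then r (nth ord0 w (size u)) (nth ord0 w (size u).+1) else 0].

(* Degree-n component of the two-sided ideal generated by the relations:
   spanned by u r v with |u| + |v| + 2 = n. *)
Definition idealDeg (K : fieldType) (al be : K) (n : nat) : {vspace freeDeg K n} :=
  (\sum_(i < n.-1) \sum_(u : i.-tuple 'I_6) \sum_(v : (n - 2 - i).-tuple 'I_6)
     \sum_(r <- rels al be) <[relgen n r u v]>)%VS.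

Definition hA (K : fieldType) (al be : K) (n : nat) : nat :=
  (\dim (fullv : {vspace freeDeg K n}) - \dim (idealDeg al be n))%N.

(* Upper bound: modulo the ideal, every word of length [n + 3] is a combination of
   the eleven normal words [c^n.+3, c^n.+2 x, c^n.+2 y, c^n.+2 z, c^n.+2 b, a c^n.+2,
   a c^n.+1 x, a c^n.+1 y, a c^n.+1 b, c^n.+1 x b, a c^n x b]. By induction on the
   length it suffices to left-multiply normal words by a letter; the letters x, y, z
   move past [c^k] at the price of a factor [al^k, be^k, 1], and
   [a c^k z = al^k a c^k x + be^k a c^k y]. Applied to [a (x + y - z) c^n b] this
   gives [(al^n + be^n - 1) a c^n x b = 0], so the last normal word is redundant
   unless [al^n + be^n = 1].
   Lower bound: two right modules over the free algebra (weighted automata of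
   dimensions 13 and 6) give linear forms on words of length [n + 3] that vanish on
   the ideal and are dual to the normal words; the second one only respects the
   relation [a (x + y - z)] in the degrees where [al^n + be^n = 1]. *)

From Stdlib Require List.
From HB Require Import structures.
From mathcomp Require Import all_boot all_order all_algebra.
From mathcomp Require Import ring zify.
Set Implicit Arguments.
Unset Strict Implicit.
Unset Printing Implicit Defensive.
Import Order.TTheory GRing.Theory Num.Theory.
Local Open Scope ring_scope.

Lemma val_ga : val ga = 0%N. Proof. exact: inordK. Qed.
Lemma val_gb : val gb = 1%N. Proof. exact: inordK. Qed.
Lemma val_gc : val gc = 2%N. Proof. exact: inordK. Qed.
Lemma val_gx : val gx = 3%N. Proof. exact: inordK. Qed.
Lemma val_gy : val gy = 4%N. Proof. exact: inordK. Qed.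
Lemma val_gz : val gz = 5%N. Proof. exact: inordK. Qed.

Lemma letterP (g : 'I_6) :
  g = ga \/ g = gb \/ g = gc \/ g = gx \/ g = gy \/ g = gz.
Proof.
case: g => [[|[|[|[|[|[|n]]]]]] lt_g6] //; [left|do 1 right; left|do 2 right; left
  |do 3 right; left|do 4 right; left|do 5 right]; apply/val_inj;
  by rewrite /= ?val_ga ?val_gb ?val_gc ?val_gx ?val_gy ?val_gz.
Qed.

Definition is_xyz (t : 'I_6) := t = gx \/ t = gy \/ t = gz.

Lemma is_xyz_val t : is_xyz t -> val t = 3%N \/ val t = 4%N \/ val t = 5%N.
Proof. by case=> [->|[->|->]]; rewrite ?val_gx ?val_gy ?val_gz; tauto. Qed.

Lemma In_cat (T : Type) (x : T) s1 s2 :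
  List.In x (s1 ++ s2) <-> List.In x s1 \/ List.In x s2.
Proof. exact: List.in_app_iff. Qed.

Lemma In_mem (T : eqType) (x : T) s : x \in s -> List.In x s.
Proof. by elim: s => //= y s IH; rewrite inE => /orP [/eqP ->|/IH]; [left|right]. Qed.

Section Words.
Variable K : fieldType.

Definition qeval (V : lmodType K) (r : quad K) (h : 'I_6 -> 'I_6 -> V) : V :=
  \sum_(s : 'I_6) \sum_(t : 'I_6) r s t *: h s t.

Lemma eq_qeval (V : lmodType K) r (h h' : 'I_6 -> 'I_6 -> V) :
  (forall s t, h s t = h' s t) -> qeval r h = qeval r h'.
Proof. by move=> eq_h; apply: eq_bigr => s _; apply: eq_bigr => t _; rewrite eq_h. Qed.

Lemma qeval_mono (V : lmodType K) p q (h : 'I_6 -> 'I_6 -> V) :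
  qeval (mono K p q) h = h p q.
Proof.
rewrite /qeval (bigD1 p) //= [X in _ + X]big1 => [|s /negbTE ne_sp]; last first.
  by apply: big1 => t _; rewrite /mono ne_sp scale0r.
rewrite addr0 (bigD1 q) //= [X in _ + X]big1 => [|t /negbTE ne_tq]; last first.
  by rewrite /mono ne_tq andbF scale0r.
by rewrite addr0 /mono !eqxx scale1r.
Qed.

Lemma qeval_add (V : lmodType K) r1 r2 (h : 'I_6 -> 'I_6 -> V) :
  qeval (qadd r1 r2) h = qeval r1 h + qeval r2 h.
Proof.
rewrite /qeval -big_split; apply: eq_bigr => s _.
by rewrite -big_split; apply: eq_bigr => t _; rewrite /qadd scalerDl.
Qed.

Lemma qeval_scale (V : lmodType K) k r (h : 'I_6 -> 'I_6 -> V) :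
  qeval (qscale k r) h = k *: qeval r h.
Proof.
rewrite /qeval scaler_sumr; apply: eq_bigr => s _.
by rewrite scaler_sumr; apply: eq_bigr => t _; rewrite /qscale scalerA.
Qed.

Lemma qeval0 (V : lmodType K) r : qeval r (fun _ _ => 0 : V) = 0.
Proof. by rewrite /qeval big1 // => s _; rewrite big1 // => t _; rewrite scaler0. Qed.

Definition qevalE := (qeval_add, qeval_scale, qeval_mono).

(* Zero unless [size w = N]. *)
Definition word (N : nat) (w : seq 'I_6) : freeDeg K N :=
  [ffun t : N.-tuple 'I_6 => ((tval t == w)%:R : K^o)].

Lemma word_decomp N (F : freeDeg K N) : F = \sum_(t : N.-tuple 'I_6) F t *: word N t.
Proof.
apply/ffunP => t0; rewrite sum_ffunE (bigD1 t0) //= big1 => [|t ne_t]; last first.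
  by rewrite !ffunE; move: ne_t; rewrite -val_eqE eq_sym => /negbTE ->; rewrite scaler0.
by rewrite !ffunE eqxx mulr1n addr0; exact: (esym (mulr1 _)).
Qed.

Lemma split_at2 (T : Type) (x0 : T) (w : seq T) i : (i.+2 <= size w)%N ->
  w = take i w ++ nth x0 w i :: nth x0 w i.+1 :: drop i.+2 w.
Proof.
move=> lt_iw; rewrite -{1}(cat_take_drop i w) (drop_nth x0); last by lia.
by rewrite (drop_nth x0); last by lia.
Qed.

Lemma relgen_word N r (u v : seq 'I_6) : (size u + size v + 2 = N)%N ->
  relgen N r u v = qeval r (fun s t => word N (u ++ s :: t :: v)).
Proof.
move=> sz_uv; apply/ffunP => w; rewrite ffunE /qeval sum_ffunE.
under eq_bigr => s _ do rewrite sum_ffunE.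
have lt_uw : ((size u).+2 <= size w)%N by rewrite size_tuple; lia.
have wordE s t : (tval w == u ++ s :: t :: v) =
   [&& take (size u) w == u, nth ord0 w (size u) == s,
       nth ord0 w (size u).+1 == t & drop (size u).+2 w == v].
  rewrite {1}(split_at2 ord0 lt_uw) eqseq_cat ?eqseq_cons //.
  by rewrite size_take ifT //; apply: leq_trans lt_uw.
rewrite addn2.
have [eq_u|ne_u] /= := boolP (take (size u) w == u); last first.
  rewrite big1 // => s _; rewrite big1 // => t _.
  by rewrite !ffunE wordE (negbTE ne_u) scaler0.
have [eq_v|ne_v] /= := boolP (drop (size u).+2 w == v); last first.
  rewrite big1 // => s _; rewrite big1 // => t _.
  by rewrite !ffunE wordE eq_u (negbTE ne_v) !andbF scaler0.
set p := nth ord0 w (size u); set q := nth ord0 w (size u).+1.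
rewrite (bigD1 p) //= [X in _ + X]big1 => [|s ne_sp]; last first.
  apply: big1 => t _; rewrite !ffunE wordE eq_u eq_v eq_sym.
  by rewrite (negbTE ne_sp) scaler0.
rewrite addr0 (bigD1 q) //= [X in _ + X]big1 => [|t ne_tq]; last first.
  by rewrite !ffunE wordE eq_u eq_v eqxx eq_sym (negbTE ne_tq) scaler0.
by rewrite addr0 !ffunE wordE eq_u eq_v !eqxx /= mulr1n; exact: (esym (mulr1 _)).
Qed.

End Words.

Lemma sumv_seq_sup (K : fieldType) (vT : vectType K) (T : Type) (s : seq T)
    (F : T -> {vspace vT}) x :
  List.In x s -> (F x <= \sum_(y <- s) F y)%VS.
Proof.
elim: s => //= y s IH [->|/IH sub_Fx]; rewrite big_cons; first exact: addvSl.
exact: subv_trans sub_Fx (addvSr _ _).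
Qed.

Lemma sumv_seq_subv (K : fieldType) (vT : vectType K) (T : Type) (s : seq T)
    (F : T -> {vspace vT}) U :
  (forall x, List.In x s -> (F x <= U)%VS) -> (\sum_(x <- s) F x <= U)%VS.
Proof.
elim: s => [|y s IH] sub_FU; first by rewrite big_nil sub0v.
rewrite big_cons subv_add sub_FU /=; last by left.
by apply: IH => x Hx; apply: sub_FU; right.
Qed.

Section Relations.
Variables (K : fieldType) (al be : K).
Local Notation I N := (idealDeg al be N).

Lemma idealDegP N (U : {vspace freeDeg K N}) :
  reflect (forall r u v, List.In r (rels al be) -> (size u + size v + 2 = N)%N ->
             relgen N r u v \in U)
          (I N <= U)%VS.
Proof.
apply: (iffP idP) => [sub_IU r u v r_rel sz_uv|rel_U].
  apply: subvP sub_IU _ _.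
  have lt_u : (size u < N.-1)%N by rewrite -sz_uv addn2 /= leq_addr.
  pose i : 'I_N.-1 := Ordinal lt_u.
  have sz_v : size v == (N - 2 - i)%N by apply/eqP; rewrite /= -sz_uv; lia.
  rewrite (_ : relgen N r u v = relgen N r (in_tuple u) (Tuple sz_v)) // memvE.
  apply: (sumv_sup i) => //; apply: (sumv_sup (in_tuple u)) => //.
  apply: (sumv_sup (Tuple sz_v)) => //.
  exact: (sumv_seq_sup (fun r0 => <[relgen N r0 (in_tuple u) (Tuple sz_v)]>%VS) r_rel).
apply/subv_sumP => i _; apply/subv_sumP => u _; apply/subv_sumP => v _.
apply: sumv_seq_subv => r r_rel; rewrite -memvE rel_U // !size_tuple.
by have := ltn_ord i; lia.
Qed.

Lemma relgen_in_ideal N r (u v : seq 'I_6) : List.In r (rels al be) ->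
  (size u + size v + 2 = N)%N -> relgen N r u v \in I N.
Proof. by move=> r_rel sz_uv; apply: (idealDegP _ (subvv _)). Qed.

Definition twist (t : 'I_6) : K := if t == gx then al else if t == gy then be else 1.

Lemma twist_gx : twist gx = al. Proof. by rewrite /twist eqxx. Qed.
Lemma twist_gy : twist gy = be.
Proof. by rewrite /twist eqxx -val_eqE val_gx val_gy. Qed.
Lemma twist_gz : twist gz = 1.
Proof. by rewrite /twist -!val_eqE val_gx val_gy val_gz. Qed.

Definition rel_az := qadd (qadd (mono K ga gx) (mono K ga gy)) (qscale (-1) (mono K ga gz)).
Definition rel_xb t := qadd (mono K gx gb) (qscale (-1) (mono K t gb)).
Definition rel_c t := qadd (mono K t gc) (qscale (- twist t) (mono K gc t)).

Lemma rels_cases r : List.In r (rels al be) ->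
  [\/ (exists u, r = mono K gb u), (exists u, r = mono K u ga),
      (exists s t, [/\ is_xyz s, is_xyz t & r = mono K s t])
    | [\/ r = rel_az, r = rel_xb gy, r = rel_xb gz | exists2 t, is_xyz t & r = rel_c t]].
Proof.
have ix : is_xyz gx by left. have iy : is_xyz gy by right; left.
have iz : is_xyz gz by right; right.
rewrite /rels => /In_cat [/List.in_map_iff [u [<- _]]|/In_cat
  [/List.in_map_iff [u [<- _]]|/In_cat [r_xyz|r_rest]]].
- by constructor 1; exists u.
- by constructor 2; exists u.
- constructor 3; move: r_xyz => /= [<-|[<-|[<-|[<-|[<-|[<-|[<-|[<-|[<-|[]]]]]]]]]];
    by do 2 eexists; split; last reflexivity.
- constructor 4; move: r_rest => /= [<-|[<-|[<-|[<-|[<-|[<-|[]]]]]]];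
    [by constructor 1|by constructor 2|by constructor 3|constructor 4..].
  + by exists gx; rewrite // /rel_c twist_gx.
  + by exists gy; rewrite // /rel_c twist_gy.
  + by exists gz; rewrite // /rel_c twist_gz.
Qed.

Lemma In_rels_b u : List.In (mono K gb u) (rels al be).
Proof.
by apply/In_cat; left; apply: (List.in_map (mono K gb)); apply: In_mem; rewrite mem_enum.
Qed.

Lemma In_rels_a u : List.In (mono K u ga) (rels al be).
Proof.
apply/In_cat; right; apply/In_cat; left.
by apply: (List.in_map (mono K^~ ga)); apply: In_mem; rewrite mem_enum.
Qed.

Lemma In_rels_xyz s t : is_xyz s -> is_xyz t -> List.In (mono K s t) (rels al be).
Proof.
move=> xs xt; do 2 (apply/In_cat; right); apply/In_cat; left.
by case: xs => [->|[->|->]]; case: xt => [->|[->|->]]; simpl; tauto.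
Qed.

Lemma In_rels_az : List.In rel_az (rels al be).
Proof. by do 3 (apply/In_cat; right); simpl; tauto. Qed.

Lemma In_rels_xb t : is_xyz t -> t != gx -> List.In (rel_xb t) (rels al be).
Proof.
by case=> [->|[->|->]]; rewrite ?eqxx // => _; do 3 (apply/In_cat; right);
  simpl; tauto.
Qed.

Lemma In_rels_c t : is_xyz t -> List.In (rel_c t) (rels al be).
Proof.
move=> xt; do 3 (apply/In_cat; right).
by case: xt => [->|[->|->]]; rewrite /rel_c ?twist_gx ?twist_gy ?twist_gz /=; tauto.
Qed.

Definition congI N (X Y : freeDeg K N) := X - Y \in I N.

Lemma congI_refl N (X : freeDeg K N) : congI X X.
Proof. by rewrite /congI subrr mem0v. Qed.

Lemma congI_sym N (X Y : freeDeg K N) : congI X Y -> congI Y X.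
Proof. by rewrite /congI -memvN opprB. Qed.

Lemma congI_trans N (X Y Z : freeDeg K N) : congI X Y -> congI Y Z -> congI X Z.
Proof. by rewrite /congI => XY YZ; have := memvD XY YZ; rewrite addrA subrK. Qed.

Lemma congI_add N (X1 X2 Y1 Y2 : freeDeg K N) :
  congI X1 Y1 -> congI X2 Y2 -> congI (X1 + X2) (Y1 + Y2).
Proof. by rewrite /congI => H1 H2; have := memvD H1 H2; rewrite opprD addrACA. Qed.

Lemma congI_scale N k (X Y : freeDeg K N) : congI X Y -> congI (k *: X) (k *: Y).
Proof. by rewrite /congI => H; have := memvZ k H; rewrite scalerBr. Qed.

Section Position.
Variables (N : nat) (p q : seq 'I_6).
Hypothesis sz_pq : (size p + size q + 2 = N)%N.
Local Notation E s t := (word K N (p ++ s :: t :: q)).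

Lemma word_b_ideal t : E gb t \in I N.
Proof. by have := relgen_in_ideal (In_rels_b t) sz_pq; rewrite relgen_word // qeval_mono. Qed.

Lemma word_a_ideal t : E t ga \in I N.
Proof. by have := relgen_in_ideal (In_rels_a t) sz_pq; rewrite relgen_word // qeval_mono. Qed.

Lemma word_xyz_ideal s t : is_xyz s -> is_xyz t -> E s t \in I N.
Proof.
move=> xs xt; have := relgen_in_ideal (In_rels_xyz xs xt) sz_pq.
by rewrite relgen_word // qeval_mono.
Qed.

Lemma congI_az : congI (E ga gz) (E ga gx + E ga gy).
Proof.
have := relgen_in_ideal In_rels_az sz_pq.
by rewrite relgen_word // /rel_az !qevalE scaleN1r; apply: congI_sym.
Qed.

Lemma congI_xb t : is_xyz t -> congI (E t gb) (E gx gb).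
Proof.
have [->|ne_tx xt] := eqVneq t gx; first by rewrite congI_refl.
have := relgen_in_ideal (In_rels_xb xt ne_tx) sz_pq.
by rewrite relgen_word // /rel_xb !qevalE scaleN1r; apply: congI_sym.
Qed.

Lemma congI_c t : is_xyz t -> congI (E t gc) (twist t *: E gc t).
Proof.
move=> xt; have := relgen_in_ideal (In_rels_c xt) sz_pq.
by rewrite relgen_word // /rel_c !qevalE scaleNr.
Qed.

End Position.

Lemma congI_shift t k p q N : is_xyz t -> (size p + k + size q + 1 = N)%N ->
  congI (word K N (p ++ t :: nseq k gc ++ q))
        (twist t ^+ k *: word K N (p ++ nseq k gc ++ t :: q)).
Proof.
move=> xt; elim: k p => [|k IH] p sz_N; first by rewrite expr0 scale1r congI_refl.
have sz_N' : (size p + size (nseq k gc ++ q) + 2 = N)%N.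
  by rewrite size_cat size_nseq -sz_N; lia.
apply: congI_trans (congI_c sz_N' xt) _.
rewrite exprS -scalerA; apply: congI_scale.
by have := IH (rcons p gc); rewrite !cat_rcons size_rcons; apply; rewrite -sz_N; lia.
Qed.

Lemma top_word_ideal n : al ^+ n + be ^+ n != 1 ->
  word K n.+3 (ga :: nseq n gc ++ [:: gx; gb]) \in I n.+3.
Proof.
move=> ab_ne1; set T := word _ _ _.
have shift t : is_xyz t -> congI (word K n.+3 (ga :: t :: nseq n gc ++ [:: gb]))
                                  (twist t ^+ n *: T).
  move=> xt; apply: congI_trans (congI_shift xt (p := [:: ga]) (q := [:: gb]) _) _.
    by rewrite /=; lia.
  apply: congI_scale; apply: (congI_xb (p := ga :: nseq n gc) (q := [::])) => //.
  by rewrite /= size_nseq; lia.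
have T_az : congI T (word K n.+3 (ga :: gz :: nseq n gc ++ [:: gb])).
  apply: congI_sym; have := shift gz (or_intror (or_intror erefl)).
  by rewrite twist_gz expr1n scale1r.
have T_ab : congI T (al ^+ n *: T + be ^+ n *: T).
  apply: congI_trans T_az _; apply: congI_trans (congI_az (p := [::]) _) _.
    by rewrite /= size_cat size_nseq /=; lia.
  by apply: congI_add; [rewrite -twist_gx; apply: shift; left|
                        rewrite -twist_gy; apply: shift; right; left].
have : (1 - (al ^+ n + be ^+ n)) *: T \in I n.+3.
  by move: T_ab; rewrite /congI -scalerDl scalerBl scale1r.
move=> /(memvZ (1 - (al ^+ n + be ^+ n))^-1); rewrite scalerA mulVf ?scale1r //.
by rewrite subr_eq0 eq_sym.
Qed.

End Relations.

Definition lmul (K : fieldType) (g : 'I_6) N (F : freeDeg K N) : freeDeg K N.+1 :=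
  [ffun t : N.+1.-tuple 'I_6 => if thead t == g then F [tuple of behead t] else 0].

Fact lmul_is_linear (K : fieldType) g N : linear (@lmul K g N).
Proof.
by move=> k F G; apply/ffunP => t; rewrite !ffunE; case: ifP; rewrite ?scaler0 ?addr0.
Qed.

HB.instance Definition _ (K : fieldType) g N :=
  GRing.isLinear.Build K (freeDeg K N) (freeDeg K N.+1) *:%R (@lmul K g N)
    (@lmul_is_linear K g N).

(* The normal words are [c^k u] and [a c^k u] ([u <> z]) with [u] in [tails]; they
   are listed in the order of the coordinates of [readout] below. *)
Definition tails : seq (seq 'I_6) :=
  [:: [::]; [:: gx]; [:: gy]; [:: gz]; [:: gb]; [:: gx; gb]].

Definition normal_words (N : nat) : seq (seq 'I_6) :=
  match N with
  | 0 => [::]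
  | m.+1 =>
    [:: nseq m.+1 gc; nseq m gc ++ [:: gx]; nseq m gc ++ [:: gy]; nseq m gc ++ [:: gz];
        nseq m gc ++ [:: gb]; ga :: nseq m gc] ++
    if m is k.+1 then
      [:: ga :: nseq k gc ++ [:: gx]; ga :: nseq k gc ++ [:: gy];
          ga :: nseq k gc ++ [:: gb]; nseq k gc ++ [:: gx; gb]] ++
      (if k is j.+1 then [:: ga :: nseq j gc ++ [:: gx; gb]] else [::])
    else [::]
  end.

Lemma normal_words_shape N w : w \in normal_words N ->
  size w = N /\
  ((exists w', w = ga :: w') \/ exists k u, List.In u tails /\ w = nseq k gc ++ u).
Proof.
have sz_nseq k u : size (nseq k gc ++ u) = (k + size u)%N by rewrite size_cat size_nseq.
case: N => [|m] //; rewrite mem_cat => /orP [|w_rest].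
  move=> /In_mem /= [<-|[<-|[<-|[<-|[<-|[<-|[]]]]]]];
    (split; first by rewrite /= ?sz_nseq ?size_nseq ?addn1); try by left; eexists.
    by right; exists m.+1, [::]; rewrite cats0; split=> //; left.
  1-4: by right; do 2 eexists; split; last reflexivity; simpl; tauto.
case: m w_rest => [|k] //; rewrite mem_cat => /orP [|].
  move=> /In_mem /= [<-|[<-|[<-|[<-|[]]]]];
    (split; first by rewrite /= ?sz_nseq ?addn1 ?addn2); try by left; eexists.
  by right; do 2 eexists; split; last reflexivity; simpl; tauto.
case: k => [|j] //; rewrite inE => /eqP ->.
by split; [rewrite /= sz_nseq addn2|left; eexists].
Qed.

Lemma normal_words_c k u : List.In u tails -> (0 < k + size u)%N ->
  nseq k gc ++ u \in normal_words (k + size u).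
Proof.
move=> /= [<-|[<-|[<-|[<-|[<-|[<-|[]]]]]]];
  rewrite /= ?addn0 ?addn1 ?addn2 // ?mem_cat ?inE ?eqxx ?orbT //.
by case: k => // k _; rewrite cats0 mem_cat inE eqxx.
Qed.

Lemma normal_words_a k u : List.In u tails -> u != [:: gz] ->
  ga :: nseq k gc ++ u \in normal_words (k + size u).+1.
Proof.
move=> /= [<-|[<-|[<-|[<-|[<-|[<-|[]]]]]]] //;
  rewrite /= ?addn0 ?addn1 ?addn2 ?cats0 ?mem_cat ?inE ?eqxx ?orbT //.
Qed.

Section Spanning.
Variables (K : fieldType) (al be : K).
Local Notation I N := (idealDeg al be N).

Definition normal_span N : {vspace freeDeg K N} := <<map (word K N) (normal_words N)>>%VS.
Local Notation W N := (I N + normal_span N)%VS.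

Lemma W_ideal N F : F \in I N -> F \in W N.
Proof. exact: subvP (addvSl _ _) F. Qed.

Lemma W_normal N w : w \in normal_words N -> word K N w \in W N.
Proof. by move=> w_normal; apply: subvP (addvSr _ _) _ _; apply/memv_span/map_f. Qed.

Lemma W_congI N (F G : freeDeg K N) : congI al be F G -> G \in W N -> F \in W N.
Proof. by move=> FG G_W; rewrite -(subrK G F) memvD // W_ideal. Qed.

Lemma lmul_word g N w : lmul g (word K N w) = word K N.+1 (g :: w).
Proof.
by apply/ffunP => t; rewrite !ffunE; case/tupleP: t => h t /=; rewrite eqseq_cons; case: eqP.
Qed.

Lemma lmul_relgen g N (r : quad K) u v : lmul g (relgen N r u v) = relgen N.+1 r (g :: u) v.
Proof.
by apply/ffunP => t; rewrite !ffunE; case/tupleP: t => h t /=; rewrite eqseq_cons; case: eqP.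
Qed.

Lemma lmul_ideal g N F : F \in I N -> lmul g F \in I N.+1.
Proof.
have sub_I : (I N <= linfun (@lmul K g N) @^-1: I N.+1)%VS.
  apply/idealDegP => r u v r_rel sz_uv; rewrite -memv_preim lfunE /= lmul_relgen.
  by apply: relgen_in_ideal; rewrite // -sz_uv.
by move=> /(subvP sub_I); rewrite -memv_preim lfunE.
Qed.

Lemma cpow_xyz_tail_in_W k t u N : is_xyz t -> List.In u tails -> (k + size u + 1 = N)%N ->
  word K N (nseq k gc ++ t :: u) \in W N.
Proof.
move=> xt + <-; move=> /= [<-|[<-|[<-|[<-|[<-|[<-|[]]]]]]]; rewrite /= ?addn0.
- apply/W_normal/normal_words_c; last by rewrite addn1.
  by case: xt => [->|[->|->]]; simpl; tauto.
- by apply: W_ideal; apply: (word_xyz_ideal al be (p := nseq k gc)) => //;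
    [rewrite size_nseq addn0 -addnA|left].
- by apply: W_ideal; apply: (word_xyz_ideal al be (p := nseq k gc)) => //;
    [rewrite size_nseq addn0 -addnA|right; left].
- by apply: W_ideal; apply: (word_xyz_ideal al be (p := nseq k gc)) => //;
    [rewrite size_nseq addn0 -addnA|right; right].
- apply: W_congI (congI_xb al be (p := nseq k gc) (q := [::]) _ xt) _.
    by rewrite size_nseq addn0 -addnA.
  by apply: W_normal; rewrite -addnA; apply: normal_words_c; [simpl; tauto|rewrite addn2].
- apply: W_ideal; apply: (word_xyz_ideal al be (p := nseq k gc) (q := [:: gb])) => //.
    by rewrite size_nseq /=; lia.
  by left.
Qed.

Lemma lmul_cpow_tail_in_W g k u N : List.In u tails -> (0 < k + size u)%N ->
  (k + size u).+1 = N -> word K N (g :: nseq k gc ++ u) \in W N.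
Proof.
move=> u_tail u_pos <-.
have ix : is_xyz gx by left. have iy : is_xyz gy by right; left.
have iz : is_xyz gz by right; right.
have [->|[->|[->|xg]]] := letterP g.
- have [->|ne_uz] := eqVneq u [:: gz]; last exact/W_normal/normal_words_a.
  have shift t : is_xyz t -> congI al be (word K (k + 1).+1 (ga :: t :: nseq k gc))
      (twist al be t ^+ k *: word K (k + 1).+1 (ga :: nseq k gc ++ [:: t])).
    move=> xt; have := congI_shift al be xt (p := [:: ga]) (q := [::]) (k := k).
    by rewrite /= !cats0; apply; lia.
  have az_za : congI al be (word K (k + 1).+1 (ga :: nseq k gc ++ [:: gz]))
                          (word K (k + 1).+1 (ga :: gz :: nseq k gc)).
    by apply: congI_sym; have := shift gz iz; rewrite twist_gz expr1n scale1r.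
  apply: W_congI az_za _.
  apply: W_congI (congI_az al be (p := [::]) (q := nseq k gc) _) _.
    by rewrite size_nseq /=; lia.
  have a_normal t : is_xyz t -> t != gz ->
      word K (k + 1).+1 (ga :: nseq k gc ++ [:: t]) \in W (k + 1).+1.
    move=> xt ne_tz; apply/W_normal/normal_words_a; last by rewrite eqseq_cons (negbTE ne_tz).
    by case: xt => [->|[->|->]]; simpl; tauto.
  apply: memvD; [apply: W_congI (shift gx ix) _|apply: W_congI (shift gy iy) _];
    apply/memvZ/a_normal => //; by rewrite -val_eqE ?val_gx ?val_gy val_gz.
- have : size (nseq k gc ++ u) = (k + size u)%N by rewrite size_cat size_nseq.
  case: (nseq k gc ++ u) => [|t q] /= sz_tq; first by rewrite -sz_tq in u_pos.
  by apply: W_ideal; apply: (word_b_ideal al be (p := [::])); rewrite /= -sz_tq; lia.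
- by apply: W_normal; rewrite -addSn; apply: (normal_words_c (k := k.+1)); rewrite ?addSn.
apply: W_congI (congI_shift al be xg (p := [::]) (q := u) _) _; first by rewrite /=; lia.
by apply/memvZ/cpow_xyz_tail_in_W; rewrite // addn1.
Qed.

Lemma lmul_normal_in_W g N w : w \in normal_words N -> word K N.+1 (g :: w) \in W N.+1.
Proof.
move=> w_normal; have N_gt0 : (0 < N)%N by case: N w_normal.
have [sz_w [[w' eq_w]|[k [u [u_tail eq_w]]]]] := normal_words_shape w_normal; subst w.
  by apply: W_ideal; apply: (word_a_ideal al be (p := [::])); rewrite -sz_w /= add0n addn2.
rewrite size_cat size_nseq in sz_w; rewrite -sz_w in N_gt0 *.
exact: lmul_cpow_tail_in_W.
Qed.

Lemma word_in_W N w : size w = N.+1 -> word K N.+1 w \in W N.+1.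
Proof.
elim: N w => [|N IH] [|g w] //= [sz_w].
  case: w sz_w => // _; apply: W_normal.
  by have [->|[->|[->|[->|[->|->]]]]] := letterP g; rewrite /= !inE eqxx ?orbT.
rewrite -lmul_word.
have sub_W : (W N.+1 <= linfun (@lmul K g N.+1) @^-1: W N.+2)%VS.
  rewrite subv_add; apply/andP; split.
    by apply/subvP => F F_I; rewrite -memv_preim lfunE /= W_ideal ?lmul_ideal.
  apply/span_subvP => _ /mapP [v v_normal ->].
  by rewrite -memv_preim lfunE /= lmul_word lmul_normal_in_W.
by have := subvP sub_W _ (IH w sz_w); rewrite -memv_preim lfunE.
Qed.

Lemma full_normal_span N : (fullv <= I N.+1 + normal_span N.+1)%VS.
Proof.
apply/subvP => F _; rewrite (word_decomp F); apply: memv_suml => t _.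
by apply/memvZ/word_in_W; rewrite size_tuple.
Qed.

Lemma hA_le_size N (S : seq (seq 'I_6)) :
  (normal_span N.+1 <= I N.+1 + <<map (word K N.+1) S>>)%VS -> (hA al be N.+1 <= size S)%N.
Proof.
move=> sub_S; rewrite /hA leq_subLR.
have sub_full : (fullv <= I N.+1 + <<map (word K N.+1) S>>)%VS.
  by apply: subv_trans (full_normal_span N) _; rewrite subv_add addvSl.
apply: leq_trans (dimvS sub_full) _; apply: leq_trans (dimv_add_leqif _ _) _.
by rewrite leq_add2l; apply: leq_trans (dim_span _) _; rewrite size_map.
Qed.

Lemma hA_le11 n : (hA al be n.+3 <= 11)%N.
Proof. exact: (hA_le_size (S := normal_words n.+3) (addvSr _ _)). Qed.

Lemma hA_le10 n : al ^+ n + be ^+ n != 1 -> (hA al be n.+3 <= 10)%N.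
Proof.
move=> ab_ne1; apply: (hA_le_size (S := take 10 (normal_words n.+3))).
apply/span_subvP => _ /mapP [w w_normal ->].
move: w_normal; rewrite -(cat_take_drop 10 (normal_words n.+3)) mem_cat => /orP [w_S|].
  by apply: subvP (addvSr _ _) _ _; apply/memv_span/map_f.
by rewrite inE => /eqP ->; apply: subvP (addvSl _ _) _ _; exact: top_word_ideal.
Qed.

End Spanning.

Section Automaton.
Variables (K : fieldType) (S : Type) (zeroS : S) (addS : S -> S -> S) (scaleS : K -> S -> S).
Variable step : nat -> S -> S.
Hypothesis step_add : forall n A B, step n (addS A B) = addS (step n A) (step n B).
Hypothesis step_scale : forall n k A, step n (scaleS k A) = scaleS k (step n A).
Hypothesis scale0_zero : scaleS 0 zeroS = zeroS.

Definition run (w : seq 'I_6) (X : S) : S := foldl (fun X g => step (val g) X) X w.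

Lemma run_cons g w X : run (g :: w) X = run w (step (val g) X).
Proof. by []. Qed.

Lemma run_cat w1 w2 X : run (w1 ++ w2) X = run w2 (run w1 X).
Proof. exact: foldl_cat. Qed.

Definition linear_readout (L : S -> K) :=
  (forall A B, L (addS A B) = L A + L B) /\ (forall k A, L (scaleS k A) = k * L A).

Lemma linear_readout_run L w : linear_readout L -> linear_readout (fun X => L (run w X)).
Proof.
have run_add v A B : run v (addS A B) = addS (run v A) (run v B).
  by elim: v A B => //= g v IH A B; rewrite /run /= -IH step_add.
have run_scale v k A : run v (scaleS k A) = scaleS k (run v A).
  by elim: v A => //= g v IH A; rewrite /run /= -IH step_scale.
by case=> L_add L_scale; split=> *; rewrite ?run_add ?run_scale.
Qed.

Lemma linear_readout0 L : linear_readout L -> L zeroS = 0.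
Proof. by case=> _ L_scale; rewrite -scale0_zero L_scale mul0r. Qed.

Lemma linear_readout_comb2 L A B k D : linear_readout L ->
  addS A (scaleS k B) = D -> L A + k * L B = L D.
Proof. by case=> L_add L_scale <-; rewrite L_add L_scale. Qed.

Lemma linear_readout_comb3 L A B C k D : linear_readout L ->
  addS (addS A B) (scaleS k C) = D -> L A + L B + k * L C = L D.
Proof. by case=> L_add L_scale <-; rewrite !L_add L_scale. Qed.

End Automaton.

Section Automata.
Variables (K : fieldType) (al be : K).

(* A 13-dimensional right module over [A]: started from [s0], the coordinates
   [sC sX sY sZ sB sA sAX sAY sAB sXB] of the state reached by a word give its
   coefficients on the normal words [c^m.+1, c^m x, c^m y, c^m z, c^m b, a c^m,
   a c^m x, a c^m y, a c^m b, c^m x b]; [sAa] and [sAb] carry [a c^j] weighted by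
   [al^j] and [be^j], since [a c^j z = al^j a c^j x + be^j a c^j y]. *)
Record state13 := State13 { s0 : K; sC : K; sX : K; sY : K; sZ : K; sB : K; sXB : K;
  sA : K; sAa : K; sAb : K; sAX : K; sAY : K; sAB : K }.

Definition zero13 := State13 0 0 0 0 0 0 0 0 0 0 0 0 0.
Definition add13 (A B : state13) := State13 (s0 A + s0 B) (sC A + sC B) (sX A + sX B)
  (sY A + sY B) (sZ A + sZ B) (sB A + sB B) (sXB A + sXB B) (sA A + sA B)
  (sAa A + sAa B) (sAb A + sAb B) (sAX A + sAX B) (sAY A + sAY B) (sAB A + sAB B).
Definition scale13 (k : K) (A : state13) := State13 (k * s0 A) (k * sC A) (k * sX A)
  (k * sY A) (k * sZ A) (k * sB A) (k * sXB A) (k * sA A) (k * sAa A) (k * sAb A)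
  (k * sAX A) (k * sAY A) (k * sAB A).

Definition step13 (n : nat) (v : state13) : state13 :=
  match n with
  | 0 => State13 0 0 0 0 0 0 0 (s0 v) (s0 v) (s0 v) 0 0 0
  | 1 => State13 0 0 0 0 0 (s0 v + sC v) (sX v + sY v + sZ v) 0 0 0 0 0 (sA v)
  | 2 => State13 0 (s0 v + sC v) (al * sX v) (be * sY v) (sZ v) 0 0 (sA v) (al * sAa v)
             (be * sAb v) (al * sAX v) (be * sAY v) 0
  | 3 => State13 0 0 (s0 v + sC v) 0 0 0 0 0 0 0 (sA v) 0 0
  | 4 => State13 0 0 0 (s0 v + sC v) 0 0 0 0 0 0 0 (sA v) 0
  | 5 => State13 0 0 0 0 (s0 v + sC v) 0 0 0 0 0 (sAa v) (sAb v) 0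
  | _ => zero13
  end.

Ltac state13_ring := rewrite /zero13 /add13 /scale13 /=; congr State13; ring.

Lemma step13_add n A B : step13 n (add13 A B) = add13 (step13 n A) (step13 n B).
Proof. by case: A; case: B => *; do 6?[case: n => [|n]]; state13_ring. Qed.

Lemma step13_scale n k A : step13 n (scale13 k A) = scale13 k (step13 n A).
Proof. by case: A => *; do 6?[case: n => [|n]]; state13_ring. Qed.

Lemma scale13_zero : scale13 0 zero13 = zero13.
Proof. by state13_ring. Qed.

Local Notation linear13 := (linear_readout add13 scale13).

Lemma step13_relation L X r : linear13 L -> List.In r (rels al be) ->
  qeval r (fun s t => (L (step13 (val t) (step13 (val s) X)) : K^o)) = 0.
Proof.
move=> L_lin /rels_cases.
have L0 : L zero13 = 0 := linear_readout0 scale13_zero L_lin.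
have comb2 := linear_readout_comb2 L_lin.
have comb3 := linear_readout_comb3 L_lin.
case=> [[u ->]|[u ->]|[s [t [xs xt ->]]]|[->|->|->|[t xt ->]]];
  rewrite !qevalE ?val_ga ?val_gb ?val_gc ?val_gx ?val_gy ?val_gz.
- by rewrite -[RHS]L0; congr L; case: (val u) => [|[|[|[|[|[|n]]]]]]; state13_ring.
- by rewrite -[RHS]L0; congr L; case: (val u) => [|[|[|[|[|[|n]]]]]]; state13_ring.
- rewrite -[RHS]L0; congr L.
  by case: (is_xyz_val xs) => [->|[->|->]]; case: (is_xyz_val xt) => [->|[->|->]];
    state13_ring.
- by rewrite -[RHS]L0; apply: comb3; state13_ring.
- by rewrite -[RHS]L0; apply: comb2; state13_ring.
- by rewrite -[RHS]L0; apply: comb2; state13_ring.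
by case: xt => [->|[->|->]]; rewrite ?twist_gx ?twist_gy ?twist_gz ?val_gx ?val_gy ?val_gz;
  rewrite -[RHS]L0; apply: comb2; state13_ring.
Qed.

(* A 6-dimensional module over the free algebra which computes, from [t0], the
   coefficient [tB] of the word [a c^m x b]. It satisfies every relation except
   [a (x + y - z)], which it respects only in the degrees [n + 3] with
   [al^n + be^n = 1]. *)
Record state6 := State6 { t0 : K; tA : K; tX : K; tY : K; tZ : K; tB : K }.

Definition zero6 := State6 0 0 0 0 0 0.
Definition add6 (A B : state6) := State6 (t0 A + t0 B) (tA A + tA B) (tX A + tX B)
  (tY A + tY B) (tZ A + tZ B) (tB A + tB B).
Definition scale6 (k : K) (A : state6) := State6 (k * t0 A) (k * tA A) (k * tX A)
  (k * tY A) (k * tZ A) (k * tB A).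

Definition step6 (n : nat) (v : state6) : state6 :=
  match n with
  | 0 => State6 0 (t0 v) 0 0 0 0
  | 1 => State6 0 0 0 0 0 (tX v + tY v + tZ v)
  | 2 => State6 0 (tA v) (al * tX v) (be * tY v) (tZ v) 0
  | 3 => State6 0 0 (tA v) 0 0 0
  | 4 => State6 0 0 0 (tA v) 0 0
  | 5 => State6 0 0 0 0 (tA v) 0
  | _ => zero6
  end.

Ltac state6_ring := rewrite /zero6 /add6 /scale6 /=; congr State6; ring.

Lemma step6_add n A B : step6 n (add6 A B) = add6 (step6 n A) (step6 n B).
Proof. by case: A; case: B => *; do 6?[case: n => [|n]]; state6_ring. Qed.

Lemma step6_scale n k A : step6 n (scale6 k A) = scale6 k (step6 n A).
Proof. by case: A => *; do 6?[case: n => [|n]]; state6_ring. Qed.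

Lemma scale6_zero : scale6 0 zero6 = zero6.
Proof. by state6_ring. Qed.

Local Notation linear6 := (linear_readout add6 scale6).

Lemma step6_relation L X r : linear6 L -> List.In r (rels al be) ->
  r = rel_az K \/ qeval r (fun s t => (L (step6 (val t) (step6 (val s) X)) : K^o)) = 0.
Proof.
move=> L_lin /rels_cases.
have L0 : L zero6 = 0 := linear_readout0 scale6_zero L_lin.
have comb2 := linear_readout_comb2 L_lin.
case=> [[u ->]|[u ->]|[s [t [xs xt ->]]]|[->|->|->|[t xt ->]]]; try by left.
all: right; rewrite !qevalE ?val_ga ?val_gb ?val_gc ?val_gx ?val_gy ?val_gz.
- by rewrite -[RHS]L0; congr L; case: (val u) => [|[|[|[|[|[|n]]]]]]; state6_ring.
- by rewrite -[RHS]L0; congr L; case: (val u) => [|[|[|[|[|[|n]]]]]]; state6_ring.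
- rewrite -[RHS]L0; congr L.
  by case: (is_xyz_val xs) => [->|[->|->]]; case: (is_xyz_val xt) => [->|[->|->]];
    state6_ring.
- by rewrite -[RHS]L0; apply: comb2; state6_ring.
- by rewrite -[RHS]L0; apply: comb2; state6_ring.
by case: xt => [->|[->|->]]; rewrite ?twist_gx ?twist_gy ?twist_gz ?val_gx ?val_gy ?val_gz;
  rewrite -[RHS]L0; apply: comb2; state6_ring.
Qed.

Lemma step6_rel_az_t0_eq0 L X : linear6 L -> t0 X = 0 ->
  qeval (rel_az K) (fun s t => (L (step6 (val t) (step6 (val s) X)) : K^o)) = 0.
Proof.
move=> L_lin; rewrite /rel_az !qevalE val_ga val_gx val_gy val_gz.
case: X => x0 x1 x2 x3 x4 x5 /= x0_0; subst x0.
rewrite -[RHS](linear_readout0 scale6_zero L_lin).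
by apply: (linear_readout_comb3 L_lin); state6_ring.
Qed.

Lemma t0_run6 w X : t0 X = 0 -> t0 (run step6 w X) = 0.
Proof.
elim: w X => //= g w IH X _; rewrite /run /= -/(run _ _ _).
by apply: IH; case: (val g) => [|[|[|[|[|[|n]]]]]].
Qed.

Lemma run6_zero w : run step6 w zero6 = zero6.
Proof.
elim: w => //= g w IH; rewrite /run /= -/(run _ _ _).
by have [->|[->|[->|[->|[->|->]]]]] := letterP g;
  rewrite ?val_ga ?val_gb ?val_gc ?val_gx ?val_gy ?val_gz /=;
  rewrite (_ : State6 _ _ _ _ _ _ = zero6) //; state6_ring.
Qed.

Lemma tB_run6 v p q r : exists k,
  tB (run step6 v (State6 0 0 p q r 0)) =
  k * (al ^+ (size v).-1 * p + be ^+ (size v).-1 * q + r).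
Proof.
elim: v p q r => [|g v IH] p q r; first by exists 0; rewrite mul0r.
rewrite /run /= -/(run _ _ _).
have killed S : S = zero6 ->
    exists k, tB (run step6 v S) = k * (al ^+ (size v) * p + be ^+ (size v) * q + r).
  by move=> ->; exists 0; rewrite run6_zero mul0r.
have [->|[->|[->|[->|[->|->]]]]] := letterP g;
  rewrite ?val_ga ?val_gb ?val_gc ?val_gx ?val_gy ?val_gz /=.
- by apply: killed; state6_ring.
- case: v {IH killed} => [|h v]; first by exists 1; rewrite /= !expr0 !mul1r.
  exists 0; rewrite mul0r /run /= -/(run _ _ _).
  have [->|[->|[->|[->|[->|->]]]]] := letterP h;
    rewrite ?val_ga ?val_gb ?val_gc ?val_gx ?val_gy ?val_gz /=;
    by rewrite (_ : State6 _ _ _ _ _ _ = zero6) ?run6_zero //; state6_ring.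
- case: v IH {killed} => [|h v] IH; first by exists 0; rewrite mul0r.
  have [k ->] := IH (al * p) (be * q) r.
  by exists k; rewrite /= !exprS; congr (_ * _); ring.
all: by apply: killed; state6_ring.
Qed.

Definition init13 := State13 1 0 0 0 0 0 0 0 0 0 0 0 0.
Definition init6 := State6 1 0 0 0 0 0.

Definition readout13 (X : state13) : seq K :=
  [:: sC X; sX X; sY X; sZ X; sB X; sA X; sAX X; sAY X; sAB X; sXB X].

Definition readout (w : seq 'I_6) : seq K :=
  readout13 (run step13 w init13) ++ [:: tB (run step6 w init6)].

Lemma linear_readout13 j : linear13 (fun X => nth 0 (readout13 X) j).
Proof. by split=> *; do 10?[case: j => [|j]]; rewrite /= ?nth_nil ?addr0 ?mulr0. Qed.

Lemma readout_relation j N r u v : List.In r (rels al be) -> (size u + size v + 2 = N)%N ->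
  (j < 10)%N \/ (exists n, N = n.+3 /\ al ^+ n + be ^+ n = 1) ->
  qeval r (fun s t => (nth 0 (readout (u ++ s :: t :: v)) j : K^o)) = 0.
Proof.
move=> r_rel sz_uv j_cond.
have run_mid step s t X : run step (u ++ s :: t :: v) X =
    run step v (step (val t) (step (val s) (run step u X))) by rewrite run_cat.
have [j_lt10|j_ge10] := ltnP j 10.
  under eq_qeval => s t do rewrite /readout nth_cat j_lt10 run_mid.
  have L_lin := linear_readout_run step13_add step13_scale v (linear_readout13 j).
  exact: step13_relation L_lin r_rel.
have [j_gt10|j_eq10] := ltnP 10 j.
  under eq_qeval => s t do rewrite nth_default ?size_cat //.
  exact: qeval0.
have -> : j = 10%N by apply/eqP; rewrite eqn_leq j_eq10.
under eq_qeval => s t do rewrite /readout nth_cat /= run_mid.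
have L_lin : linear6 (fun X => tB (run step6 v X)).
  by apply: (linear_readout_run step6_add step6_scale); split.
have [->|//] := step6_relation (run step6 u init6) L_lin r_rel.
case: u sz_uv {run_mid} => [|g u] sz_uv; last first.
  apply: (step6_rel_az_t0_eq0 L_lin); rewrite /run /= -/(run _ _ _).
  by apply: t0_run6; case: (val g) => [|[|[|[|[|[|n]]]]]].
case: j_cond => [|[n [eq_N ab1]]]; first by rewrite ltnNge j_ge10.
rewrite /rel_az !qevalE val_ga val_gx val_gy val_gz /=.
rewrite (linear_readout_comb3 (D := State6 0 0 1 1 (-1) 0) L_lin); last by state6_ring.
have [k ->] := tB_run6 v 1 1 (-1).
have -> : (size v).-1 = n by move: sz_uv; rewrite eq_N /=; lia.
by rewrite !mulr1 ab1 subrr mulr0.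
Qed.

Lemma run13_cpow m X : run step13 (nseq m gc) X =
  State13 (if m is 0 then s0 X else 0) (if m is 0 then sC X else s0 X + sC X)
    (al ^+ m * sX X) (be ^+ m * sY X) (sZ X) (if m is 0 then sB X else 0)
    (if m is 0 then sXB X else 0) (sA X) (al ^+ m * sAa X) (be ^+ m * sAb X)
    (al ^+ m * sAX X) (be ^+ m * sAY X) (if m is 0 then sAB X else 0).
Proof.
elim: m X => [|m IH] X; first by case: X => * /=; congr State13; ring.
rewrite [nseq _ _]/= run_cons IH val_gc.
by case: m {IH} => [|m]; rewrite /= ?expr0 ?exprS ?expr0; congr State13; ring.
Qed.

Lemma run6_cpow m X : run step6 (nseq m gc) X =
  State6 (if m is 0 then t0 X else 0) (tA X) (al ^+ m * tX X) (be ^+ m * tY X) (tZ X)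
    (if m is 0 then tB X else 0).
Proof.
elim: m X => [|m IH] X; first by case: X => * /=; congr State6; ring.
rewrite [nseq _ _]/= run_cons IH val_gc.
by case: m {IH} => [|m]; rewrite /= ?expr0 ?exprS ?expr0; congr State6; ring.
Qed.

Lemma readout_normal n j : (j < 11)%N ->
  readout (nth [::] (normal_words n.+3) j) = [seq (i == j)%:R | i <- iota 0 11].
Proof.
case: j => [|[|[|[|[|[|[|[|[|[|[|j]]]]]]]]]]] // _; rewrite [nth _ _ _]/= /readout;
  do 4 rewrite ?run_cons ?run_cat ?run13_cpow ?run6_cpow;
  rewrite ?val_ga ?val_gb ?val_gc ?val_gx ?val_gy ?val_gz /readout13 /=;
  by case: n => [|n] /=; congr [:: _; _; _; _; _; _; _; _; _; _; _]; ring.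
Qed.

End Automata.

Definition readout_row (K : fieldType) (al be : K) k (w : seq 'I_6) : 'rV[K]_k :=
  \row_(j < k) nth 0 (readout al be w) j.

Definition readout_map (K : fieldType) (al be : K) k N (F : freeDeg K N) : 'rV[K]_k :=
  \sum_(t : N.-tuple 'I_6) F t *: readout_row al be k t.

Arguments readout_map {K} al be k N F.

Fact readout_map_is_linear (K : fieldType) (al be : K) k N : linear (@readout_map K al be k N).
Proof.
move=> a F G; rewrite /readout_map scaler_sumr -big_split; apply: eq_bigr => t _.
by rewrite !ffunE scalerDl scalerA.
Qed.

HB.instance Definition _ (K : fieldType) (al be : K) k N :=
  GRing.isLinear.Build K (freeDeg K N) 'rV[K]_k *:%R (@readout_map K al be k N)
    (@readout_map_is_linear K al be k N).

Section LowerBound.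
Variables (K : fieldType) (al be : K).
Local Notation I N := (idealDeg al be N).

Lemma hA_ge_rank k N (f : {linear freeDeg K N -> 'rV[K]_k}) :
  (I N <= lker (linfun f))%VS -> (forall j, exists F, f F = delta_mx 0 j) ->
  (k <= hA al be N)%N.
Proof.
move=> sub_I f_onto; set g := linfun f.
have img_g : (g @: fullv)%VS = fullv.
  apply/eqP; rewrite eqEsubv subvf /=; apply/subvP => x _.
  rewrite (row_sum_delta x); apply: memv_suml => j _; apply: memvZ.
  by have [F <-] := f_onto j; rewrite -(lfunE f F) memv_img ?memvf.
have := limg_ker_dim g fullv; rewrite capfv img_g dimvf dim_matrix mul1r => dim_full.
rewrite /hA leq_subRL ?dimvS ?subvf // -dim_full leq_add2r.
exact: dimvS.
Qed.

Lemma readout_map_word k N w : size w = N ->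
  readout_map al be k N (word K N w) = readout_row al be k w.
Proof.
move=> sz_w; have sz_w' : size w == N by apply/eqP.
rewrite /readout_map (bigD1 (Tuple sz_w')) //= big1 => [|t ne_t]; last first.
  by rewrite ffunE; move: ne_t; rewrite -val_eqE /= => /negbTE ->; rewrite scale0r.
by rewrite ffunE eqxx scale1r addr0.
Qed.

Lemma readout_map_ideal k N : (k <= 10)%N \/ (exists n, N = n.+3 /\ al ^+ n + be ^+ n = 1) ->
  (I N <= lker (linfun (readout_map al be k N)))%VS.
Proof.
move=> k_cond; apply/idealDegP => r u v r_rel sz_uv.
rewrite memv_ker lfunE /= relgen_word // /qeval linear_sum; apply/eqP/rowP => j.
rewrite summxE mxE -[RHS](readout_relation (j := j) r_rel sz_uv); last first.
  by case: k_cond => [le_k10|]; [left; exact: leq_trans (ltn_ord j) le_k10|right].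
apply: eq_bigr => s _; rewrite linear_sum summxE; apply: eq_bigr => t _.
rewrite linearZ /= readout_map_word ?mxE // size_cat /= -sz_uv; lia.
Qed.

Lemma readout_map_normal k n (j : 'I_k) : (k <= 11)%N ->
  readout_map al be k n.+3 (word K n.+3 (nth [::] (normal_words n.+3) j)) = delta_mx 0 j.
Proof.
move=> le_k11; have lt_j11 : (j < 11)%N by exact: leq_trans (ltn_ord j) le_k11.
have w_normal : nth [::] (normal_words n.+3) j \in normal_words n.+3 by rewrite mem_nth.
rewrite readout_map_word; last by case: (normal_words_shape w_normal).
apply/rowP => i; rewrite !mxE readout_normal //.
have lt_i11 : (i < 11)%N by exact: leq_trans (ltn_ord i) le_k11.
by rewrite (nth_map 0%N) ?size_iota // nth_iota // add0n eqxx /= -val_eqE /=; case: (_ == _).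
Qed.

Lemma hA_ge n k : (k <= 11)%N -> (k <= 10)%N \/ al ^+ n + be ^+ n = 1 ->
  (k <= hA al be n.+3)%N.
Proof.
move=> le_k11 k_cond; apply: (hA_ge_rank (f := readout_map al be k n.+3)).
  by apply: readout_map_ideal; case: k_cond => [|ab1]; [left|right; exists n].
by move=> j; exists (word K n.+3 (nth [::] (normal_words n.+3) j)); exact: readout_map_normal.
Qed.

Lemma hA_degree n : hA al be (n + 3) = if al ^+ n + be ^+ n == 1 then 11%N else 10%N.
Proof.
rewrite addn3; apply/eqP; rewrite eqn_leq; case: eqP => [ab1|/eqP ab_ne1].
  by rewrite hA_le11 hA_ge //; right.
by rewrite hA_le10 // hA_ge //; left.
Qed.

End LowerBound.

Theorem proposition5p3 (K : fieldType) (al be : K) (hal : al != 0) (hbe : be != 0) :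
  (forall n : nat,
      hA al be (n + 3) = if al ^+ n + be ^+ n == 1 then 11%N else 10%N)
  /\
  ((forall n : nat, (3 <= n)%N -> forall a b : K, a != 0 -> b != 0 ->
        a ^+ n + b ^+ n != 1)
   <->
   (forall a b : K, a != 0 -> b != 0 -> forall i : nat, (6 <= i)%N ->
        hA a b i = 10%N)).
Proof.
split; first exact: hA_degree.
split=> [no_sol a b a0 b0 i le6i|h10 n le3n a b a0 b0].
  have le3i : (3 <= i)%N by apply: leq_trans le6i.
  rewrite -(subnK le3i) hA_degree; case: eqP => // ab1.
  have le3i3 : (3 <= i - 3)%N by rewrite leq_subRL.
  by have := no_sol _ le3i3 a b a0 b0; rewrite ab1 eqxx.
have le6n : (6 <= n + 3)%N by rewrite (leq_add2r 3 3).
by have := h10 a b a0 b0 _ le6n; rewrite hA_degree; case: eqP => // /eqP.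
Qed.
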